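(* Let $\mathscr{B}$ be a cotensored $\mathscr{V}$-category with $\mathscr{V}$-cokernel-pairs, $\mathscr{V}$-pullbacks of $\mathscr{V}$-monos along arbitrary morphisms, and arbitrary $\mathscr{V}$-intersections of $\mathscr{V}$-monos. Then $(\mathsf{StrEpi}_\mathscr{V}\mathscr{B},\mathsf{Mono}_\mathscr{V}\mathscr{B})$ is a $\mathscr{V}$-factorization-system on $\mathscr{B}$.
   Context: $\mathscr{V}$ is a closed symmetric monoidal category (no limits assumed). In a $\mathscr{V}$-category $\mathscr{B}$: $\mathscr{V}$-limits are cones sent by all $\mathscr{B}(A,-):\mathscr{B}\to\mathscr{V}$ to limit cones; $\mathscr{V}$-cokernel-pairs are $\mathscr{V}$-kernel-pairs in $\mathscr{B}^{op}$. $\mathsf{Mono}_\mathscr{V}\mathscr{B}$: morphisms $m$ with $\mathscr{B}(A,m)$ mono in $\mathscr{V}$ for all $A$; $\mathscr{V}$-epis: $e$ with $\mathscr{B}(e,C)$ mono for all $C$. A $\mathscr{V}$-intersection of a class-indexed family of $\mathscr{V}$-monos with common codomain is its $\mathscr{V}$-fibre-product (wide $\mathscr{V}$-pullback). For $e:A_1\to A_2$, $m:B_1\to B_2$, $e\downarrow_\mathscr{V} m$ means the square formed by $\mathscr{B}(A_2,m)$, $\mathscr{B}(A_1,m)$, $\mathscr{B}(e,B_1)$, $\mathscr{B}(e,B_2)$ is a pullback in $\mathscr{V}$. $\mathsf{StrEpi}_\mathscr{V}\mathscr{B}$ is the class of $\mathscr{V}$-epis $e$ with $e\downarrow_\mathscr{V}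 m$ for every $\mathscr{V}$-mono $m$. A $\mathscr{V}$-factorization-system is a pair $(\mathscr{E},\mathscr{M})$ such that $\mathscr{M}$ is exactly the class of $m$ with $e\downarrow_\mathscr{V} m$ for all $e\in\mathscr{E}$, $\mathscr{E}$ exactly the class of $e$ with $e\downarrow_\mathscr{V} m$ for all $m\in\mathscr{M}$, and every morphism is assigned a factorization $m\cdot e$ with $e\in\mathscr{E}$, $m\in\mathscr{M}$. *)

Record SMCC := {
  Vob : Type;
  Vhom : Vob -> Vob -> Type;
  Vcomp : forall X Y Z, Vhom Y Z -> Vhom X Y -> Vhom X Z;
  Vid : forall X, Vhom X X;
  Vcomp_assoc : forall X Y Z W (h : Vhom Z W) (g : Vhom Y Z) (f : Vhom X Y),
      Vcomp _ _ _ h (Vcomp _ _ _ g f) = Vcomp _ _ _ (Vcomp _ _ _ h g) f;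
  Vid_l : forall X Y (f : Vhom X Y), Vcomp _ _ _ (Vid Y) f = f;
  Vid_r : forall X Y (f : Vhom X Y), Vcomp _ _ _ f (Vid X) = f;
  Vten : Vob -> Vob -> Vob;
  Vtenm : forall X X' Y Y', Vhom X X' -> Vhom Y Y' -> Vhom (Vten X Y) (Vten X' Y');
  Vtenm_id : forall X Y, Vtenm _ _ _ _ (Vid X) (Vid Y) = Vid (Vten X Y);
  Vtenm_comp : forall X X' X'' Y Y' Y'' (f : Vhom X X') (f' : Vhom X' X'')
      (g : Vhom Y Y') (g' : Vhom Y' Y''),
      Vtenm _ _ _ _ (Vcomp _ _ _ f' f) (Vcomp _ _ _ g' g)
      = Vcomp _ _ _ (Vtenm _ _ _ _ f' g') (Vtenm _ _ _ _ f g);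
  VI : Vob;
  Va : forall X Y Z, Vhom (Vten (Vten X Y) Z) (Vten X (Vten Y Z));
  Va_inv : forall X Y Z, Vhom (Vten X (Vten Y Z)) (Vten (Vten X Y) Z);
  Va_iso1 : forall X Y Z, Vcomp _ _ _ (Va_inv X Y Z) (Va X Y Z) = Vid _;
  Va_iso2 : forall X Y Z, Vcomp _ _ _ (Va X Y Z) (Va_inv X Y Z) = Vid _;
  Va_nat : forall X X' Y Y' Z Z' (f : Vhom X X') (g : Vhom Y Y') (h : Vhom Z Z'),
      Vcomp _ _ _ (Va X' Y' Z') (Vtenm _ _ _ _ (Vtenm _ _ _ _ f g) h)
      = Vcomp _ _ _ (Vtenm _ _ _ _ f (Vtenm _ _ _ _ g h)) (Va X Y Z);
  Vl : forall X, Vhom (Vten VI X) X;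
  Vl_inv : forall X, Vhom X (Vten VI X);
  Vl_iso1 : forall X, Vcomp _ _ _ (Vl_inv X) (Vl X) = Vid _;
  Vl_iso2 : forall X, Vcomp _ _ _ (Vl X) (Vl_inv X) = Vid _;
  Vl_nat : forall X Y (f : Vhom X Y),
      Vcomp _ _ _ f (Vl X) = Vcomp _ _ _ (Vl Y) (Vtenm _ _ _ _ (Vid VI) f);
  Vr : forall X, Vhom (Vten X VI) X;
  Vr_inv : forall X, Vhom X (Vten X VI);
  Vr_iso1 : forall X, Vcomp _ _ _ (Vr_inv X) (Vr X) = Vid _;
  Vr_iso2 : forall X, Vcomp _ _ _ (Vr X) (Vr_inv X) = Vid _;
  Vr_nat : forall X Y (f : Vhom X Y),
      Vcomp _ _ _ f (Vr X) = Vcomp _ _ _ (Vr Y) (Vtenm _ _ _ _ f (Vid VI));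
  Vpentagon : forall W X Y Z,
      Vcomp _ _ _ (Va W X (Vten Y Z)) (Va (Vten W X) Y Z)
      = Vcomp _ _ _ (Vtenm _ _ _ _ (Vid W) (Va X Y Z))
          (Vcomp _ _ _ (Va W (Vten X Y) Z) (Vtenm _ _ _ _ (Va W X Y) (Vid Z)));
  Vtriangle : forall X Y,
      Vcomp _ _ _ (Vtenm _ _ _ _ (Vid X) (Vl Y)) (Va X VI Y)
      = Vtenm _ _ _ _ (Vr X) (Vid Y);
  Vs : forall X Y, Vhom (Vten X Y) (Vten Y X);
  Vs_nat : forall X X' Y Y' (f : Vhom X X') (g : Vhom Y Y'),
      Vcomp _ _ _ (Vs X' Y') (Vtenm _ _ _ _ f g)
      = Vcomp _ _ _ (Vtenm _ _ _ _ g f) (Vs X Y);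
  Vs_invol : forall X Y, Vcomp _ _ _ (Vs Y X) (Vs X Y) = Vid _;
  Vhexagon : forall X Y Z,
      Vcomp _ _ _ (Va Y Z X) (Vcomp _ _ _ (Vs X (Vten Y Z)) (Va X Y Z))
      = Vcomp _ _ _ (Vtenm _ _ _ _ (Vid Y) (Vs X Z))
          (Vcomp _ _ _ (Va Y X Z) (Vtenm _ _ _ _ (Vs X Y) (Vid Z)));
  Vihom : Vob -> Vob -> Vob;
  Vev : forall X Y, Vhom (Vten (Vihom X Y) X) Y;
  Vcurry : forall Z X Y, Vhom (Vten Z X) Y -> Vhom Z (Vihom X Y);
  Vcurry_ev : forall Z X Y (f : Vhom (Vten Z X) Y),
      Vcomp _ _ _ (Vev X Y) (Vtenm _ _ _ _ (Vcurry _ _ _ f) (Vid X)) = f;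
  Vcurry_uniq : forall Z X Y (f : Vhom (Vten Z X) Y) (g : Vhom Z (Vihom X Y)),
      Vcomp _ _ _ (Vev X Y) (Vtenm _ _ _ _ g (Vid X)) = f -> g = Vcurry _ _ _ f
}.

Arguments Vhom {_} _ _.
Arguments Vcomp {_ _ _ _} _ _.
Arguments Vid {_} _.
Arguments Vten {_} _ _.
Arguments Vtenm {_ _ _ _ _} _ _.
Arguments VI {_}.
Arguments Va {_} _ _ _.
Arguments Vl {_} _.
Arguments Vl_inv {_} _.
Arguments Vr {_} _.
Arguments Vr_inv {_} _.
Arguments Vs {_} _ _.
Arguments Vihom {_} _ _.
Arguments Vev {_} _ _.
Arguments Vcurry {_ _ _ _} _.

Definition is_mono {V : SMCC} {X Y : Vob V} (h : Vhom X Y) : Prop :=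
  forall W (u v : Vhom W X), Vcomp h u = Vcomp h v -> u = v.

Definition is_iso {V : SMCC} {X Y : Vob V} (h : Vhom X Y) : Prop :=
  exists h' : Vhom Y X, Vcomp h' h = Vid X /\ Vcomp h h' = Vid Y.

Definition is_pullback {V : SMCC} {P X Y Z : Vob V}
  (a : Vhom P X) (b : Vhom P Y) (f : Vhom X Z) (g : Vhom Y Z) : Prop :=
  Vcomp f a = Vcomp g b /\
  forall W (u : Vhom W X) (v : Vhom W Y), Vcomp f u = Vcomp g v ->
    exists! w : Vhom W P, Vcomp a w = u /\ Vcomp b w = v.

Definition is_wide_pullback {V : SMCC} {I : Type} {Y : I -> Vob V} {P Z : Vob V}
  (f : forall i, Vhom (Y i) Z) (a : forall i, Vhom P (Y i)) (d : Vhom P Z) : Prop :=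
  (forall i, Vcomp (f i) (a i) = d) /\
  forall W (u : forall i, Vhom W (Y i)) (v : Vhom W Z),
    (forall i, Vcomp (f i) (u i) = v) ->
    exists! w : Vhom W P, (forall i, Vcomp (a i) w = u i) /\ Vcomp d w = v.

Record VCat (V : SMCC) := {
  Bob : Type;
  Bhom : Bob -> Bob -> Vob V;
  Bcomp : forall A B C, Vhom (Vten (Bhom B C) (Bhom A B)) (Bhom A C);
  Bid : forall A, Vhom VI (Bhom A A);
  Bassoc : forall A B C D,
      Vcomp (Bcomp A C D) (Vcomp (Vtenm (Vid (Bhom C D)) (Bcomp A B C))
                                 (Va (Bhom C D) (Bhom B C) (Bhom A B)))
      = Vcomp (Bcomp A B D) (Vtenm (Bcomp B C D) (Vid (Bhom A B)));
  Bunit_l : forall A B,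
      Vcomp (Bcomp A B B) (Vtenm (Bid B) (Vid (Bhom A B))) = Vl (Bhom A B);
  Bunit_r : forall A B,
      Vcomp (Bcomp A A B) (Vtenm (Vid (Bhom A B)) (Bid A)) = Vr (Bhom A B)
}.

Arguments Bob {_} _.
Arguments Bhom {_} _ _ _.
Arguments Bcomp {_} _ _ _ _.
Arguments Bid {_} _ _.

Section VCatNotions.
Context {V : SMCC} (B : VCat V).

(* morphisms of the underlying ordinary category *)
Definition Arr (A C : Bob B) : Type := Vhom (@VI V) (Bhom B A C).

Definition acomp {A C D : Bob B} (g : Arr C D) (f : Arr A C) : Arr A D :=
  Vcomp (Bcomp B A C D) (Vcomp (Vtenm g f) (Vl_inv VI)).

Definition postc (A : Bob B) {C1 C2 : Bob B} (m : Arr C1 C2)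
  : Vhom (Bhom B A C1) (Bhom B A C2) :=
  Vcomp (Bcomp B A C1 C2) (Vcomp (Vtenm m (Vid (Bhom B A C1))) (Vl_inv (Bhom B A C1))).

Definition prec {A1 A2 : Bob B} (e : Arr A1 A2) (C : Bob B)
  : Vhom (Bhom B A2 C) (Bhom B A1 C) :=
  Vcomp (Bcomp B A1 A2 C) (Vcomp (Vtenm (Vid (Bhom B A2 C)) e) (Vr_inv (Bhom B A2 C))).

Definition Class : Type := forall A C : Bob B, Arr A C -> Prop.

Definition VMono : Class := fun A C m => forall X, is_mono (postc X m).

Definition VEpi : Class := fun A C e => forall X, is_mono (prec e X).

Definition vorth {A1 A2 C1 C2 : Bob B} (e : Arr A1 A2) (m : Arr C1 C2) : Prop :=
  is_pullback (prec e C1) (postc A2 m) (postc A1 m) (prec e C2).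

Definition StrEpi : Class := fun A1 A2 e =>
  VEpi A1 A2 e /\ forall C1 C2 (m : Arr C1 C2), VMono C1 C2 m -> vorth e m.

Definition VFactSystem (E M : Class) : Prop :=
  (forall C1 C2 (m : Arr C1 C2),
      M C1 C2 m <-> forall A1 A2 (e : Arr A1 A2), E A1 A2 e -> vorth e m) /\
  (forall A1 A2 (e : Arr A1 A2),
      E A1 A2 e <-> forall C1 C2 (m : Arr C1 C2), M C1 C2 m -> vorth e m) /\
  (forall A C (f : Arr A C), exists (D : Bob B) (e : Arr A D) (m : Arr D C),
      E A D e /\ M D C m /\ f = acomp m e).

Definition is_vpullback {P A D C : Bob B} (p1 : Arr P A) (p2 : Arr P D)
  (f : Arr A C) (g : Arr D C) : Prop :=
  acomp f p1 = acomp g p2 /\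
  forall X, is_pullback (postc X p1) (postc X p2) (postc X f) (postc X g).

(* V-cokernel-pair of f : A -> D, i.e. a V-kernel-pair in B^op:
   the hom functors B(-,X) send it to pullbacks in V *)
Definition is_vcokernel_pair {A D Q : Bob B} (f : Arr A D) (q1 q2 : Arr D Q) : Prop :=
  acomp q1 f = acomp q2 f /\
  forall X, is_pullback (prec q1 X) (prec q2 X) (prec f X) (prec f X).

Definition is_vintersection {I : Type} {Ci : I -> Bob B} {C P : Bob B}
  (m : forall i, Arr (Ci i) C) (p : forall i, Arr P (Ci i)) (d : Arr P C) : Prop :=
  (forall i, acomp (m i) (p i) = d) /\
  forall X, is_wide_pullback (fun i => postc X (m i)) (fun i => postc X (p i)) (postc X d).

(* cotensor [X, C] with counit eps : X -> B([X,C], C): the induced map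
   B(A,[X,C]) -> [X, B(A,C)] is an isomorphism for every A *)
Definition cotensor_map {X : Vob V} {Cc C : Bob B} (eps : Vhom X (Bhom B Cc C)) (A : Bob B)
  : Vhom (Bhom B A Cc) (Vihom X (Bhom B A C)) :=
  Vcurry (Vcomp (Bcomp B A Cc C) (Vcomp (Vtenm eps (Vid (Bhom B A Cc))) (Vs (Bhom B A Cc) X))).

Definition is_cotensored : Prop :=
  forall (X : Vob V) (C : Bob B), exists (Cc : Bob B) (eps : Vhom X (Bhom B Cc C)),
    forall A, is_iso (cotensor_map eps A).

Definition has_vcokernel_pairs : Prop :=
  forall A D (f : Arr A D), exists Q (q1 q2 : Arr D Q), is_vcokernel_pair f q1 q2.

Definition has_vpullbacks_of_vmonos : Prop :=
  forall A D C (f : Arr A C) (m : Arr D C), VMono D C m ->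
    exists P (p1 : Arr P A) (p2 : Arr P D), is_vpullback p1 p2 f m.

Definition has_vintersections_of_vmonos : Prop :=
  forall (I : Type) (Ci : I -> Bob B) (C : Bob B) (m : forall i, Arr (Ci i) C),
    (forall i, VMono (Ci i) C (m i)) ->
    exists P (p : forall i, Arr P (Ci i)) (d : Arr P C), is_vintersection m p d.

End VCatNotions.

(* Factor f : A -> C through the V-intersection d : P -> C of all V-monos through which
   f factors.  The first factor e : A -> P is then minimal: a V-mono n into P through which
   e factors has a section compatible with e.  Pulling back V-monos along arrows out of P,
   minimality yields diagonal fill-ins for ordinary squares with e on the left and a
   V-mono on the right.  For the cokernel pair (q1, q2) of e, q1 is split mono, and the
   fill-in of the square q2 e = q1 e forces q1 = q2, so e is a V-epi.  V-orthogonality of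
   e to a V-mono m asks for fill-ins of squares of generalized elements W -> B(-,-); the
   cotensor [W,-] turns these into ordinary squares against the V-mono [W,m].  Finally
   the two orthogonality characterisations follow from the factorization by the usual
   retract argument. *)


Section MonoidalCalculus.
Variable V : SMCC.
Local Notation "g ∘ f" := (@Vcomp V _ _ _ g f) (at level 40, left associativity).
Local Notation "f ⊗ g" := (@Vtenm V _ _ _ _ f g) (at level 35).
Local Notation I := (@VI V).

Lemma compA {X Y Z W : Vob V} (h : Vhom Z W) (g : Vhom Y Z) (f : Vhom X Y) :
  h ∘ (g ∘ f) = h ∘ g ∘ f.
Proof. apply Vcomp_assoc. Qed.
Lemma id_l {X Y : Vob V} (f : Vhom X Y) : Vid Y ∘ f = f.
Proof. apply Vid_l. Qed.
Lemma id_r {X Y : Vob V} (f : Vhom X Y) : f ∘ Vid X = f.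
Proof. apply Vid_r. Qed.
Lemma ten_id (X Y : Vob V) : Vid X ⊗ Vid Y = Vid (Vten X Y).
Proof. apply Vtenm_id. Qed.
Lemma ten_comp {X X' X'' Y Y' Y'' : Vob V} (f : Vhom X X') (f' : Vhom X' X'')
      (g : Vhom Y Y') (g' : Vhom Y' Y'') :
  (f' ∘ f) ⊗ (g' ∘ g) = (f' ⊗ g') ∘ (f ⊗ g).
Proof. apply Vtenm_comp. Qed.
Lemma ten_id_comp {X Y Y' Y'' : Vob V} (g : Vhom Y' Y'') (f : Vhom Y Y') :
  Vid X ⊗ (g ∘ f) = (Vid X ⊗ g) ∘ (Vid X ⊗ f).
Proof. rewrite <- ten_comp, id_l. reflexivity. Qed.
Lemma ten_comp_id {X X' X'' Y : Vob V} (g : Vhom X' X'') (f : Vhom X X') :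
  (g ∘ f) ⊗ Vid Y = (g ⊗ Vid Y) ∘ (f ⊗ Vid Y).
Proof. rewrite <- ten_comp, id_l. reflexivity. Qed.
Lemma ten_interchange {X X' Y Y' : Vob V} (f : Vhom X X') (g : Vhom Y Y') :
  (f ⊗ Vid Y') ∘ (Vid X ⊗ g) = (Vid X' ⊗ g) ∘ (f ⊗ Vid Y).
Proof. rewrite <- !ten_comp, !id_l, !id_r. reflexivity. Qed.

Lemma assoc_nat {X X' Y Y' Z Z' : Vob V} (f : Vhom X X') (g : Vhom Y Y') (h : Vhom Z Z') :
  Va X' Y' Z' ∘ ((f ⊗ g) ⊗ h) = (f ⊗ (g ⊗ h)) ∘ Va X Y Z.
Proof. apply Va_nat. Qed.
Lemma sym_nat {X X' Y Y' : Vob V} (f : Vhom X X') (g : Vhom Y Y') :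
  Vs X' Y' ∘ (f ⊗ g) = (g ⊗ f) ∘ Vs X Y.
Proof. apply Vs_nat. Qed.

Lemma postcomp_eq {X Y Z W : Vob V} (g : Vhom Y Z) (f : Vhom X Y) (h : Vhom X Z)
  (k : Vhom Z W) : g ∘ f = h -> k ∘ g ∘ f = k ∘ h.
Proof. intro E. rewrite <- compA, E. reflexivity. Qed.

Tactic Notation "rw" uconstr(L) :=
  first [rewrite L | rewrite (postcomp_eq _ _ _ _ L)]; rewrite ?compA.
Tactic Notation "rwb" uconstr(L) :=
  first [rewrite <- L | rewrite (postcomp_eq _ _ _ _ (eq_sym L))]; rewrite ?compA.

Lemma split_epi_cancel {X Y Z : Vob V} (g g' : Vhom Y Z) (h : Vhom X Y) (h' : Vhom Y X) :
  h ∘ h' = Vid Y -> g ∘ h = g' ∘ h -> g = g'.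
Proof.
  intros E Hg. rewrite <- (id_r g), <- (id_r g'), <- E, !compA, Hg. reflexivity.
Qed.
Lemma split_mono_cancel {X Y Z : Vob V} (g g' : Vhom X Y) (h : Vhom Y Z) (h' : Vhom Z Y) :
  h' ∘ h = Vid Y -> h ∘ g = h ∘ g' -> g = g'.
Proof.
  intros E Hg. rewrite <- (id_l g), <- (id_l g'), <- E, <- !compA, Hg. reflexivity.
Qed.

Lemma mono_comp {X Y Z : Vob V} (g : Vhom Y Z) (f : Vhom X Y) :
  is_mono g -> is_mono f -> is_mono (g ∘ f).
Proof. intros Hg Hf W u v E. apply Hf, Hg. rewrite !compA. exact E. Qed.
Lemma split_mono {X Y : Vob V} (r : Vhom Y X) (f : Vhom X Y) : r ∘ f = Vid X -> is_mono f.
Proof.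
  intros E W u v Hf. rewrite <- (id_l u), <- (id_l v), <- E, <- !compA, Hf. reflexivity.
Qed.

Lemma lunitor_inv_nat {X Y : Vob V} (f : Vhom X Y) : Vl_inv Y ∘ f = (Vid I ⊗ f) ∘ Vl_inv X.
Proof.
  apply (split_epi_cancel _ _ (Vl X) (Vl_inv X)); [apply Vl_iso2|].
  rewrite <- !compA, Vl_iso1, id_r, (Vl_nat V), compA, Vl_iso1, id_l. reflexivity.
Qed.
Lemma runitor_inv_nat {X Y : Vob V} (f : Vhom X Y) : Vr_inv Y ∘ f = (f ⊗ Vid I) ∘ Vr_inv X.
Proof.
  apply (split_epi_cancel _ _ (Vr X) (Vr_inv X)); [apply Vr_iso2|].
  rewrite <- !compA, Vr_iso1, id_r, (Vr_nat V), compA, Vr_iso1, id_l. reflexivity.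
Qed.
Lemma assoc_inv_nat {X X' Y Y' Z Z' : Vob V} (f : Vhom X X') (g : Vhom Y Y') (h : Vhom Z Z') :
  Va_inv V X' Y' Z' ∘ (f ⊗ (g ⊗ h)) = ((f ⊗ g) ⊗ h) ∘ Va_inv V X Y Z.
Proof.
  apply (split_epi_cancel _ _ (Va X Y Z) (Va_inv V X Y Z)); [apply Va_iso2|].
  rewrite <- !compA, (Va_iso1 V), id_r, <- (Va_nat V), compA, (Va_iso1 V), id_l. reflexivity.
Qed.

Lemma unit_ten_inj {X Y : Vob V} (f g : Vhom X Y) : Vid I ⊗ f = Vid I ⊗ g -> f = g.
Proof.
  intro E. apply (split_epi_cancel _ _ (Vl X) (Vl_inv X)); [apply Vl_iso2|].
  rewrite !(Vl_nat V), E. reflexivity.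
Qed.
Lemma ten_unit_inj {X Y : Vob V} (f g : Vhom X Y) : f ⊗ Vid I = g ⊗ Vid I -> f = g.
Proof.
  intro E. apply (split_epi_cancel _ _ (Vr X) (Vr_inv X)); [apply Vr_iso2|].
  rewrite !(Vr_nat V), E. reflexivity.
Qed.

Lemma ten_id_r_inverse {X X' Y : Vob V} (h : Vhom X X') (h' : Vhom X' X) :
  h ∘ h' = Vid X' -> (h ⊗ Vid Y) ∘ (h' ⊗ Vid Y) = Vid _.
Proof. intro E. rewrite <- ten_comp, E, id_l, ten_id. reflexivity. Qed.
Lemma ten_id_l_inverse {X Y Y' : Vob V} (h : Vhom Y Y') (h' : Vhom Y' Y) :
  h ∘ h' = Vid Y' -> (Vid X ⊗ h) ∘ (Vid X ⊗ h') = Vid _.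
Proof. intro E. rewrite <- ten_comp, E, id_l, ten_id. reflexivity. Qed.

(* Kelly's coherence consequences of the pentagon and triangle axioms. *)
Lemma lunitor_assoc (X Y : Vob V) : Vl (Vten X Y) ∘ Va I X Y = Vl X ⊗ Vid Y.
Proof.
  apply unit_ten_inj.
  set (G := Va I (Vten I X) Y ∘ (Va I I X ⊗ Vid Y)).
  set (G' := (Va_inv V I I X ⊗ Vid Y) ∘ Va_inv V I (Vten I X) Y).
  assert (HG : G ∘ G' = Vid _).
  { unfold G, G'.
    rewrite <- !compA, (compA (Va I I X ⊗ Vid Y)), (ten_id_r_inverse _ _ (Va_iso2 V _ _ _)), id_l.
    apply Va_iso2. }
  apply (split_epi_cancel _ _ G G' HG). unfold G.
  rewrite ten_id_comp, <- !compA, <- (Vpentagon V), !compA.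
  rewrite (Vtriangle V), <- (ten_id X Y), <- (Va_nat V), <- (Vtriangle V), ten_comp_id.
  rewrite compA, (Va_nat V). reflexivity.
Qed.

Lemma runitor_assoc (X Y : Vob V) : (Vid X ⊗ Vr Y) ∘ Va X Y I = Vr (Vten X Y).
Proof.
  symmetry. apply ten_unit_inj.
  apply (split_mono_cancel _ _ (Va X Y I) (Va_inv V X Y I)); [apply Va_iso1|].
  rewrite <- (Vtriangle V (Vten X Y) I), <- (ten_id X Y), compA, (Va_nat V), <- compA,
    (Vpentagon V).
  rewrite !compA, <- ten_id_comp, (Vtriangle V), <- (Va_nat V), ten_comp_id, !compA.
  reflexivity.
Qed.

Lemma lunitor_unit_ten (X : Vob V) : Vl (Vten I X) = Vid I ⊗ Vl X.
Proof.
  apply (split_mono_cancel _ _ (Vl X) (Vl_inv X)); [apply Vl_iso1|]. apply Vl_nat.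
Qed.

Lemma lunitor_unit : Vl I = Vr I.
Proof.
  apply ten_unit_inj. rewrite <- lunitor_assoc, <- (Vtriangle V), lunitor_unit_ten.
  reflexivity.
Qed.

Lemma lunitor_inv_unit : Vl_inv I = Vr_inv I.
Proof.
  apply (split_mono_cancel _ _ (Vr I) (Vr_inv I)); [apply Vr_iso1|].
  rewrite (Vr_iso2 V), <- lunitor_unit. apply Vl_iso2.
Qed.

Lemma lunitor_inv_assoc (Y Z : Vob V) :
  Va I Y Z ∘ (Vl_inv Y ⊗ Vid Z) = Vl_inv (Vten Y Z).
Proof.
  apply (split_mono_cancel _ _ (Vl (Vten Y Z)) (Vl_inv _)); [apply Vl_iso1|].
  rewrite compA, lunitor_assoc, <- ten_comp, (Vl_iso2 V), id_l, ten_id, (Vl_iso2 V).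
  reflexivity.
Qed.
Lemma runitor_inv_assoc (X Y : Vob V) :
  Va X Y I ∘ Vr_inv (Vten X Y) = Vid X ⊗ Vr_inv Y.
Proof.
  apply (split_mono_cancel _ _ (Vid X ⊗ Vr Y) (Vid X ⊗ Vr_inv Y));
    [apply ten_id_l_inverse; apply Vr_iso1|].
  rewrite compA, runitor_assoc, (Vr_iso2 V), <- ten_id_comp, (Vr_iso2 V), ten_id.
  reflexivity.
Qed.
Lemma triangle_inv (X Y : Vob V) :
  Va_inv V X I Y ∘ (Vid X ⊗ Vl_inv Y) = Vr_inv X ⊗ Vid Y.
Proof.
  apply (split_mono_cancel _ _ (Vr X ⊗ Vid Y) (Vr_inv X ⊗ Vid Y));
    [apply ten_id_r_inverse; apply Vr_iso1|].
  rewrite <- ten_comp_id, (Vr_iso2 V), ten_id.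
  rewrite <- (Vtriangle V), <- !compA, (compA (Va X I Y)), (Va_iso2 V), id_l, <- ten_id_comp,
    (Vl_iso2 V), ten_id.
  reflexivity.
Qed.

Lemma curry_ev {Z X Y : Vob V} (f : Vhom (Vten Z X) Y) :
  Vev X Y ∘ (Vcurry f ⊗ Vid X) = f.
Proof. apply Vcurry_ev. Qed.
Lemma curry_uniq {Z X Y : Vob V} (f : Vhom (Vten Z X) Y) (g : Vhom Z (Vihom X Y)) :
  Vev X Y ∘ (g ⊗ Vid X) = f -> g = Vcurry f.
Proof. apply Vcurry_uniq. Qed.

Section VCategory.
Variable B : VCat V.
Local Notation comp := (Bcomp B).
Local Notation H := (Bhom B).

Lemma postc_def (X : Bob B) {C1 C2 : Bob B} (m : Arr B C1 C2) :
  postc B X m = comp X C1 C2 ∘ (m ⊗ Vid _) ∘ Vl_inv _.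
Proof. unfold postc. rewrite compA. reflexivity. Qed.
Lemma prec_def {A1 A2 : Bob B} (e : Arr B A1 A2) (C : Bob B) :
  prec B e C = comp A1 A2 C ∘ (Vid _ ⊗ e) ∘ Vr_inv _.
Proof. unfold prec. rewrite compA. reflexivity. Qed.

Lemma postc_elem {X C1 C2 : Bob B} (m : Arr B C1 C2) (a : Arr B X C1) :
  postc B X m ∘ a = acomp B m a.
Proof.
  unfold postc, acomp. rewrite !compA. rw (lunitor_inv_nat _). rwb (ten_comp _ _ _ _).
  rewrite id_l, id_r. reflexivity.
Qed.
Lemma prec_elem {A1 A2 X : Bob B} (e : Arr B A1 A2) (a : Arr B A2 X) :
  prec B e X ∘ a = acomp B a e.
Proof.
  unfold prec, acomp. rewrite !compA. rw (runitor_inv_nat _). rwb (ten_comp _ _ _ _).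
  rewrite id_l, id_r, lunitor_inv_unit. reflexivity.
Qed.

Lemma Bcomp_postc {X K C1 C2 : Bob B} (m : Arr B C1 C2) :
  comp X K C2 ∘ (postc B K m ⊗ Vid (H X K)) = postc B X m ∘ comp X K C1.
Proof.
  unfold postc. rewrite !ten_comp_id, !compA, <- Bassoc, !compA. rw (assoc_nat _ _ _).
  rewrite ten_id. rw (lunitor_inv_assoc _ _). rwb (ten_interchange _ _).
  rwb (lunitor_inv_nat _). reflexivity.
Qed.
Lemma Bcomp_prec {A1 A2 K C : Bob B} (e : Arr B A1 A2) :
  prec B e C ∘ comp A2 K C = comp A1 K C ∘ (Vid (H K C) ⊗ prec B e K).
Proof.
  unfold prec. rewrite !compA. rw (runitor_inv_nat _). rwb (ten_interchange _ _).
  rewrite <- Bassoc, !compA, <- (ten_id (H K C) (H A2 K)). rw (assoc_nat _ _ _).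
  rw (runitor_inv_assoc _ _). rewrite !ten_id_comp, !compA. reflexivity.
Qed.
Lemma Bcomp_dinat {X K1 K2 C : Bob B} (m : Arr B K1 K2) :
  comp X K2 C ∘ (Vid (H K2 C) ⊗ postc B X m) = comp X K1 C ∘ (prec B m C ⊗ Vid (H X K1)).
Proof.
  assert (Bassoc_inv : forall A0 A1 A2 A3 : Bob B,
    comp A0 A2 A3 ∘ (Vid (H A2 A3) ⊗ comp A0 A1 A2)
    = comp A0 A1 A3 ∘ (comp A1 A2 A3 ⊗ Vid (H A0 A1)) ∘ Va_inv V _ _ _).
  { intros. rewrite <- Bassoc, <- !compA, (Va_iso2 V), id_r. reflexivity. }
  unfold postc, prec. rewrite !ten_id_comp, !ten_comp_id, !compA, Bassoc_inv.
  rw (assoc_inv_nat _ _ _). rw (triangle_inv _ _). reflexivity.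
Qed.

Lemma postc_id (X C : Bob B) : postc B X (Bid B C) = Vid _.
Proof. rewrite postc_def, Bunit_l, (Vl_iso2 V). reflexivity. Qed.
Lemma prec_id (X C : Bob B) : prec B (Bid B X) C = Vid _.
Proof. rewrite prec_def, Bunit_r, (Vr_iso2 V). reflexivity. Qed.

Lemma postc_comp {X A1 A2 A3 : Bob B} (g : Arr B A2 A3) (f : Arr B A1 A2) :
  postc B X (acomp B g f) = postc B X g ∘ postc B X f.
Proof.
  rewrite (postc_def X (acomp B g f)), (postc_def X f), !compA, <- Bcomp_postc, ?compA.
  rwb (ten_comp_id _ _). rewrite postc_elem. reflexivity.
Qed.
Lemma prec_comp {A1 A2 A3 X : Bob B} (g : Arr B A2 A3) (f : Arr B A1 A2) :
  prec B (acomp B g f) X = prec B f X ∘ prec B g X.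
Proof.
  rewrite (prec_def (acomp B g f)), (prec_def g), !compA, Bcomp_prec, ?compA.
  rwb (ten_id_comp _ _). rewrite prec_elem. reflexivity.
Qed.

Lemma prec_postc_comm {A1 A2 C1 C2 : Bob B} (e : Arr B A1 A2) (m : Arr B C1 C2) :
  prec B e C2 ∘ postc B A2 m = postc B A1 m ∘ prec B e C1.
Proof.
  rewrite (postc_def A2 m), (postc_def A1 m), !compA, Bcomp_prec, ?compA.
  rwb (ten_interchange _ _). rwb (lunitor_inv_nat _). reflexivity.
Qed.

Lemma acomp_assoc {A1 A2 A3 A4 : Bob B} (h : Arr B A3 A4) (g : Arr B A2 A3)
  (f : Arr B A1 A2) : acomp B (acomp B h g) f = acomp B h (acomp B g f).
Proof.
  rewrite <- (postc_elem (acomp B h g) f), postc_comp, <- compA, !postc_elem. reflexivity.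
Qed.
Lemma acomp_idl {A C : Bob B} (f : Arr B A C) : acomp B (Bid B C) f = f.
Proof. rewrite <- postc_elem, postc_id, id_l. reflexivity. Qed.
Lemma acomp_idr {A C : Bob B} (f : Arr B A C) : acomp B f (Bid B A) = f.
Proof. rewrite <- prec_elem, prec_id, id_l. reflexivity. Qed.

Lemma cotensor_map_ev {W : Vob V} {Cc C : Bob B} (eps : Vhom W (H Cc C)) (A : Bob B)
  (h : Arr B A Cc) :
  Vev _ _ ∘ ((cotensor_map B eps A ∘ h) ⊗ Vid W) = prec B h C ∘ eps ∘ (Vr W ∘ Vs I W).
Proof.
  rewrite ten_comp_id, compA. unfold cotensor_map. rewrite curry_ev, !compA.
  rw (sym_nat _ _). rwb (ten_comp _ _ _ _). rewrite id_l, id_r, prec_def.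
  rw (runitor_inv_nat _). rw (Vr_iso1 V _). rewrite id_r. rwb (ten_comp _ _ _ _).
  rewrite id_l, id_r. reflexivity.
Qed.

Lemma cotensor_transpose_inj {W : Vob V} {Cc C : Bob B} (eps : Vhom W (H Cc C))
  (A : Bob B) (Hi : is_iso (cotensor_map B eps A)) (h1 h2 : Arr B A Cc) :
  prec B h1 C ∘ eps = prec B h2 C ∘ eps -> h1 = h2.
Proof.
  intro E. destruct Hi as [phi' [Hi1 _]].
  apply (split_mono_cancel _ _ _ _ Hi1).
  rewrite (curry_uniq _ _ (cotensor_map_ev eps A h1)),
    (curry_uniq _ _ (cotensor_map_ev eps A h2)), E.
  reflexivity.
Qed.

Lemma cotensor_transpose_surj {W : Vob V} {Cc C : Bob B} (eps : Vhom W (H Cc C))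
  (A : Bob B) (Hi : is_iso (cotensor_map B eps A)) (u : Vhom W (H A C)) :
  exists h : Arr B A Cc, prec B h C ∘ eps = u.
Proof.
  destruct Hi as [phi' [_ Hi2]].
  exists (phi' ∘ Vcurry (u ∘ (Vr W ∘ Vs I W))).
  assert (Hr : (Vr W ∘ Vs I W) ∘ (Vs W I ∘ Vr_inv W) = Vid _).
  { rewrite !compA. rw (Vs_invol V _ _). rewrite id_r. apply Vr_iso2. }
  apply (split_epi_cancel _ _ _ _ Hr).
  rewrite <- cotensor_map_ev, compA, Hi2, id_l, curry_ev. reflexivity.
Qed.

(* [mW] is the arrow [W,C1] -> [W,C2] induced by [m]. *)
Lemma cotensor_vmono {W : Vob V} {K1 K2 C1 C2 : Bob B}
  (eps1 : Vhom W (H K1 C1)) (eps2 : Vhom W (H K2 C2))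
  (Hi1 : forall A, is_iso (cotensor_map B eps1 A))
  (m : Arr B C1 C2) (mW : Arr B K1 K2)
  (HmW : prec B mW C2 ∘ eps2 = postc B K1 m ∘ eps1) :
  VMono B C1 C2 m -> VMono B K1 K2 mW.
Proof.
  intros Hm X Z z1 z2 E.
  assert (Transposed : forall z : Vhom Z (H X K1),
    postc B X m ∘ (Vev _ _ ∘ ((cotensor_map B eps1 X ∘ z) ⊗ Vid W)) =
    comp X K2 C2 ∘ (eps2 ⊗ Vid _) ∘ Vs _ _ ∘ ((postc B X mW ∘ z) ⊗ Vid W)).
  { intro z. rewrite ten_comp_id, !compA. unfold cotensor_map. rw (curry_ev _).
    rewrite <- Bcomp_postc. rwb (ten_comp_id _ _). rewrite <- HmW, ten_comp_id, !compA,
      <- Bcomp_dinat.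
    rwb (ten_interchange _ _). rwb (sym_nat _ _). rwb (ten_comp_id _ _). reflexivity. }
  destruct (Hi1 X) as [phi' [Hi _]].
  apply (split_mono_cancel _ _ _ _ Hi).
  rewrite (curry_uniq _ _ (eq_refl (Vev _ _ ∘ ((cotensor_map B eps1 X ∘ z1) ⊗ Vid W)))),
    (curry_uniq _ _ (eq_refl (Vev _ _ ∘ ((cotensor_map B eps1 X ∘ z2) ⊗ Vid W)))).
  f_equal. apply (Hm X). rewrite !Transposed, E. reflexivity.
Qed.

Lemma vmono_comp {A1 A2 A3 : Bob B} (g : Arr B A2 A3) (f : Arr B A1 A2) :
  VMono B _ _ g -> VMono B _ _ f -> VMono B _ _ (acomp B g f).
Proof. intros Hg Hf X. rewrite postc_comp. apply mono_comp; auto. Qed.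
Lemma vepi_comp {A1 A2 A3 : Bob B} (g : Arr B A2 A3) (f : Arr B A1 A2) :
  VEpi B _ _ g -> VEpi B _ _ f -> VEpi B _ _ (acomp B g f).
Proof. intros Hg Hf X. rewrite prec_comp. apply mono_comp; auto. Qed.
Lemma vmono_split {A1 A2 : Bob B} (r : Arr B A2 A1) (f : Arr B A1 A2) :
  acomp B r f = Bid B A1 -> VMono B _ _ f.
Proof.
  intros E X. apply (split_mono (postc B X r)). rewrite <- postc_comp, E, postc_id.
  reflexivity.
Qed.
Lemma vepi_split {A1 A2 : Bob B} (f : Arr B A1 A2) (r : Arr B A2 A1) :
  acomp B f r = Bid B A2 -> VEpi B _ _ f.
Proof.
  intros E X. apply (split_mono (prec B r X)). rewrite <- prec_comp, E, prec_id.
  reflexivity.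
Qed.
Lemma vmono_cancel {A C D : Bob B} (m : Arr B C D) (x y : Arr B A C) :
  VMono B _ _ m -> acomp B m x = acomp B m y -> x = y.
Proof. intros Hm E. apply (Hm A VI). rewrite !postc_elem. exact E. Qed.

Lemma vorth_lift {A1 A2 C1 C2 : Bob B} (e : Arr B A1 A2) (m : Arr B C1 C2)
  (a : Arr B A1 C1) (b : Arr B A2 C2) :
  vorth B e m -> acomp B m a = acomp B b e ->
  exists w, acomp B w e = a /\ acomp B m w = b.
Proof.
  intros [_ Ho] E. destruct (Ho VI a b) as [w [[Hw1 Hw2] _]].
  - rewrite postc_elem, prec_elem. exact E.
  - exists w. rewrite <- (prec_elem e w), <- (postc_elem m w). auto.
Qed.

Lemma vintersection_vmono {Ix : Type} {Ci : Ix -> Bob B} {C P : Bob B}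
  (m : forall i, Arr B (Ci i) C) (p : forall i, Arr B P (Ci i)) (d : Arr B P C) :
  is_vintersection B m p d -> (forall i, VMono B _ _ (m i)) -> VMono B _ _ d.
Proof.
  intros [_ Hd] Hm X W z1 z2 E. destruct (Hd X) as [Hc Hu].
  destruct (Hu W (fun i => postc B X (p i) ∘ z1) (postc B X d ∘ z1)) as [w [_ Huq]].
  { intro i. rewrite compA, Hc. reflexivity. }
  transitivity w; [symmetry|]; apply Huq; split; auto.
  intro i. apply (Hm i X). rewrite !compA, Hc, E. reflexivity.
Qed.

Lemma vpullback_vmono {P A D C : Bob B} (p1 : Arr B P A) (p2 : Arr B P D)
  (f : Arr B A C) (m : Arr B D C) :
  is_vpullback B p1 p2 f m -> VMono B _ _ m -> VMono B _ _ p1.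
Proof.
  intros [_ Hp] Hm X W z1 z2 E. destruct (Hp X) as [Hc Hu].
  destruct (Hu W (postc B X p1 ∘ z1) (postc B X p2 ∘ z1)) as [w [_ Huq]].
  { rewrite !compA, Hc. reflexivity. }
  transitivity w; [symmetry|]; apply Huq; split; auto.
  apply (Hm X). rewrite !compA, <- Hc, <- !compA, E. reflexivity.
Qed.

Lemma vpullback_elem {P A D C X : Bob B} (p1 : Arr B P A) (p2 : Arr B P D)
  (f : Arr B A C) (m : Arr B D C) (a : Arr B X A) (b : Arr B X D) :
  is_vpullback B p1 p2 f m -> acomp B f a = acomp B m b ->
  exists k, acomp B p1 k = a /\ acomp B p2 k = b.
Proof.
  intros [_ Hp] E. destruct (proj2 (Hp X) VI a b) as [k [[Hk1 Hk2] _]].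
  - rewrite !postc_elem. exact E.
  - exists k. rewrite <- !postc_elem. auto.
Qed.

Lemma vcokernel_pair_elem {A D Q X : Bob B} (e : Arr B A D) (q1 q2 : Arr B D Q)
  (a b : Arr B D X) :
  is_vcokernel_pair B e q1 q2 -> acomp B a e = acomp B b e ->
  exists c, acomp B c q1 = a /\ acomp B c q2 = b.
Proof.
  intros [_ Hq] E. destruct (proj2 (Hq X) VI a b) as [c [[Hc1 Hc2] _]].
  - rewrite !prec_elem. exact E.
  - exists c. rewrite <- !prec_elem. auto.
Qed.

Lemma vcokernel_pair_diag_vepi {A D Q : Bob B} (e : Arr B A D) (q : Arr B D Q) :
  is_vcokernel_pair B e q q -> VEpi B _ _ e.
Proof.
  intros [_ Hq] X W u v E. destruct (proj2 (Hq X) W u v E) as [w [[Hw1 Hw2] _]].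
  rewrite <- Hw1. exact Hw2.
Qed.

Definition mono_minimal {A P : Bob B} (e : Arr B A P) : Prop :=
  forall P' (n : Arr B P' P) (k : Arr B A P'), VMono B _ _ n -> acomp B n k = e ->
    exists s : Arr B P P', acomp B n s = Bid B P /\ acomp B s e = k.

Record vmono_factor {A C : Bob B} (f : Arr B A C) := {
  vf_ob : Bob B;
  vf_mono : Arr B vf_ob C;
  vf_arr : Arr B A vf_ob;
  vf_vmono : VMono B _ _ vf_mono;
  vf_eq : f = acomp B vf_mono vf_arr }.

Lemma intersection_factorization (Hint : has_vintersections_of_vmonos B)
  {A C : Bob B} (f : Arr B A C) :
  exists P (e : Arr B A P) (d : Arr B P C),
    VMono B _ _ d /\ f = acomp B d e /\ mono_minimal e.
Proof.
  destruct (Hint (vmono_factor f) (vf_ob f) C (vf_mono f) (vf_vmono f)) as [P [p [d Hd]]].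
  assert (dmono : VMono B P C d) by exact (vintersection_vmono _ _ _ Hd (vf_vmono f)).
  destruct Hd as [Hd1 Hd2].
  destruct (proj2 (Hd2 A) VI (vf_arr f) f) as [e [[He1 He2] _]].
  { intro i. rewrite postc_elem. symmetry. apply vf_eq. }
  rewrite postc_elem in He2.
  exists P, e, d. split; [exact dmono | split; [symmetry; exact He2 |]].
  intros P' n k Hn Hk.
  assert (Ef : f = acomp B (acomp B d n) k).
  { rewrite acomp_assoc, Hk, He2. reflexivity. }
  pose (j := {| vf_ob := P'; vf_mono := acomp B d n; vf_arr := k;
                vf_vmono := vmono_comp d n dmono Hn; vf_eq := Ef |} : vmono_factor f).
  exists (p j). split.
  - apply (vmono_cancel d); auto. rewrite acomp_idr, <- acomp_assoc. exact (Hd1 j).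
  - rewrite <- postc_elem. exact (He1 j).
Qed.

Lemma mono_minimal_lift (Hpb : has_vpullbacks_of_vmonos B)
  {A P M N : Bob B} (e : Arr B A P) (n : Arr B N M) (u : Arr B A N) (v : Arr B P M) :
  mono_minimal e -> VMono B _ _ n -> acomp B v e = acomp B n u ->
  exists w, acomp B w e = u /\ acomp B n w = v.
Proof.
  intros Hmin Hn E.
  destruct (Hpb _ _ _ v n Hn) as [P' [r1 [r2 Hr]]].
  destruct (vpullback_elem r1 r2 v n e u Hr E) as [k [Hk1 Hk2]].
  destruct (Hmin P' r1 k (vpullback_vmono r1 r2 v n Hr Hn) Hk1) as [s [Hs1 Hs2]].
  exists (acomp B r2 s). split.
  - rewrite acomp_assoc, Hs2. exact Hk2.
  - rewrite <- acomp_assoc, <- (proj1 Hr), acomp_assoc, Hs1, acomp_idr. reflexivity.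
Qed.

Lemma mono_minimal_vepi (Hcok : has_vcokernel_pairs B) (Hpb : has_vpullbacks_of_vmonos B)
  {A P : Bob B} (e : Arr B A P) : mono_minimal e -> VEpi B _ _ e.
Proof.
  intro Hmin.
  destruct (Hcok _ _ e) as [Q [q1 [q2 Hq]]].
  destruct (vcokernel_pair_elem e q1 q2 (Bid B P) (Bid B P) Hq eq_refl) as [c [Hc1 Hc2]].
  destruct (mono_minimal_lift Hpb e q1 e q2 Hmin (vmono_split c q1 Hc1)
                (eq_sym (proj1 Hq)))
    as [w [_ Hw]].
  assert (Ew : w = Bid B P).
  { rewrite <- Hc2, <- Hw, <- acomp_assoc, Hc1, acomp_idl. reflexivity. }
  rewrite Ew, acomp_idr in Hw. rewrite Hw in Hq.
  exact (vcokernel_pair_diag_vepi e q2 Hq).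
Qed.

Lemma mono_minimal_vorth (Hcot : is_cotensored B) (Hpb : has_vpullbacks_of_vmonos B)
  {A P C1 C2 : Bob B} (e : Arr B A P) (m : Arr B C1 C2) :
  mono_minimal e -> VEpi B _ _ e -> VMono B _ _ m -> vorth B e m.
Proof.
  intros Hmin Hepi Hm. split; [symmetry; apply prec_postc_comm|].
  intros W u v Huv.
  destruct (Hcot W C1) as [K1 [eps1 Hi1]].
  destruct (Hcot W C2) as [K2 [eps2 Hi2]].
  destruct (cotensor_transpose_surj eps1 A (Hi1 A) u) as [u' Hu'].
  destruct (cotensor_transpose_surj eps2 P (Hi2 P) v) as [v' Hv'].
  destruct (cotensor_transpose_surj eps2 K1 (Hi2 K1) (postc B K1 m ∘ eps1)) as [mW HmW].
  assert (Esq : acomp B v' e = acomp B mW u').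
  { apply (cotensor_transpose_inj eps2 A (Hi2 A)).
    rewrite !prec_comp, <- !compA, HmW, Hv', !compA, prec_postc_comm, <- compA, Hu'.
    symmetry. exact Huv. }
  destruct (mono_minimal_lift Hpb e mW u' v' Hmin (cotensor_vmono eps1 eps2 Hi1 m mW HmW Hm)
              Esq) as [w [Hw1 Hw2]].
  exists (prec B w C1 ∘ eps1). split.
  - split.
    + rewrite compA, <- prec_comp, Hw1. exact Hu'.
    + rewrite compA, <- prec_postc_comm, <- compA, <- HmW, compA, <- prec_comp, Hw2.
      exact Hv'.
  - intros w' [Hw' _]. apply (Hepi C1).
    rewrite Hw', compA, <- prec_comp, Hw1. exact Hu'.
Qed.

Lemma strepi_vmono_factorization (Hcot : is_cotensored B) (Hcok : has_vcokernel_pairs B)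
  (Hpb : has_vpullbacks_of_vmonos B) (Hint : has_vintersections_of_vmonos B)
  (A C : Bob B) (f : Arr B A C) :
  exists D (e : Arr B A D) (m : Arr B D C),
    StrEpi B A D e /\ VMono B D C m /\ f = acomp B m e.
Proof.
  destruct (intersection_factorization Hint f) as [P [e [d [Hd [Ef Hmin]]]]].
  pose proof (mono_minimal_vepi Hcok Hpb e Hmin) as Hepi.
  exists P, e, d. split; [|split; assumption].
  split; [exact Hepi|].
  intros C1 C2 m Hm. exact (mono_minimal_vorth Hcot Hpb e m Hmin Hepi Hm).
Qed.

Lemma vmono_of_vorth_factor {A D C : Bob B} (e : Arr B A D) (m' : Arr B D C)
  (m : Arr B A C) :
  VMono B _ _ m' -> m = acomp B m' e -> vorth B e m -> VMono B _ _ m.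
Proof.
  intros Hm' Em Ho.
  destruct (vorth_lift e m (Bid B A) m' Ho) as [w [Hw _]].
  { rewrite acomp_idr. exact Em. }
  rewrite Em. exact (vmono_comp m' e Hm' (vmono_split w e Hw)).
Qed.

Lemma vepi_of_vorth_factor {A D C : Bob B} (e' : Arr B A D) (m' : Arr B D C)
  (e : Arr B A C) :
  VEpi B _ _ e' -> e = acomp B m' e' -> vorth B e m' -> VEpi B _ _ e.
Proof.
  intros He' Ee Ho.
  destruct (vorth_lift e m' e' (Bid B C) Ho) as [w [_ Hw]].
  { rewrite acomp_idl. symmetry. exact Ee. }
  rewrite Ee. exact (vepi_comp m' e' (vepi_split m' w Hw) He').
Qed.

End VCategory.
End MonoidalCalculus.

Theorem corollary7p10 (V : SMCC) (B : VCat V)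
  (Hcot : is_cotensored B)
  (Hcok : has_vcokernel_pairs B)
  (Hpb : has_vpullbacks_of_vmonos B)
  (Hint : has_vintersections_of_vmonos B) :
  VFactSystem B (StrEpi B) (VMono B).
Proof.
  pose proof (strepi_vmono_factorization V B Hcot Hcok Hpb Hint) as Fac.
  split; [|split].
  - intros C1 C2 m. split.
    + intros Hm A1 A2 e [_ He]. exact (He _ _ m Hm).
    + intros Ho. destruct (Fac _ _ m) as [D [e' [m' [He' [Hm' Em]]]]].
      exact (vmono_of_vorth_factor V B e' m' m Hm' Em (Ho _ _ e' He')).
  - intros A1 A2 e. split.
    + intros [_ He]. exact He.
    + intros Ho. split; [|exact Ho].
      destruct (Fac _ _ e) as [D [e' [m' [[He' _] [Hm' Ee]]]]].
      exact (vepi_of_vorth_factor V B e' m' e He' Ee (Ho _ _ m' Hm')).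
  - exact Fac.
Qed.
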